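(* Let $n,m\in\mathbb N$ with $n<m$, and let $\mathbb P^T_n=\{p^{(k)}_n:k\in\mathbb N\}$, $\mathbb P^T_m=\{p^{(k)}_m:k\in\mathbb N\}$. Then $\mathbb P^T_n\cap\mathbb P^T_m\neq\emptyset$ if and only if $m\in\mathbb P^T_n$. Moreover, if $m\in\mathbb P^T_n$, say $m=p^{(k)}_n$, then $\mathbb P^T_m\subset\mathbb P^T_n$ and $\mathbb P^T_n\setminus\mathbb P^T_m=\{p^{(1)}_n,p^{(2)}_n,\dots,p^{(k)}_n\}$.
   Context: Let $p_n$ denote the $n$-th prime number. Define $p^{(0)}_n=n$ and recursively $p^{(k+1)}_n=p_{p^{(k)}_n}$ for $k\in\mathbb N_0$. *)

From mathcomp Require Import all_boot.
Set Implicit Arguments. Unset Strict Implicit. Unset Printing Implicit Defensive.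

Lemma exists_prime_above (x : nat) : exists p, (x < p) && prime p.
Proof. by case: (prime_above x) => p H1 H2; exists p; rewrite H1 H2. Defined.

Definition next_prime (x : nat) : nat := ex_minn (exists_prime_above x).

(* p_n, the n-th prime, for n >= 1: p_1 = 2, p_2 = 3, ...
   (p_0 = 1 is a meaningless placeholder, never used by the statement.) *)
Definition nth_prime (n : nat) : nat := iter n next_prime 1.

Definition iter_prime (k n : nat) : nat := iter k nth_prime n.

Definition PT (n : nat) : nat -> Prop :=
  fun x => exists k, 0 < k /\ x = iter_prime k n.

From mathcomp Require Import all_boot.
Set Implicit Arguments. Unset Strict Implicit.

(* The tower P^T_n is the forward orbit of n under the map x |-> p_x, which is
   injective and satisfies x < p_x.  For such a map, equal iterates
   f^i(n) = f^j(m) with j <= i cancel to m = f^(i-j)(n); and iterates strictly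
   increase along an orbit, so an orbit element determines its index.  Hence two
   orbits meet only when one starts inside the other, and the elements of the
   orbit of n missed by the orbit of m = f^k(n) are exactly f^1(n), ..., f^k(n). *)

Definition forward_orbit (f : nat -> nat) (n x : nat) : Prop :=
  exists k, 0 < k /\ x = iter k f n.

Section ForwardOrbit.

Variable f : nat -> nat.
Hypothesis f_inj : injective f.
Hypothesis f_gt : forall x, x < f x.

Lemma iter_ge k x : x <= iter k f x.
Proof. by elim: k => //= k IHk; apply: leq_trans IHk (ltnW (f_gt _)). Qed.

Lemma iter_gt k x : 0 < k -> x < iter k f x.
Proof. by case: k => //= k _; apply: leq_trans (f_gt _); rewrite ltnS iter_ge. Qed.

Lemma ltn_iter i j x : i < j -> iter i f x < iter j f x.
Proof. by move=> lt_ij; rewrite -(subnK (ltnW lt_ij)) iterD iter_gt ?subn_gt0. Qed.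

Lemma iter_inj k : injective (iter k f).
Proof. by elim: k => [|k IHk] x y //= /f_inj /IHk. Qed.

Lemma iter_cancel i j n m : j <= i -> iter i f n = iter j f m -> m = iter (i - j) f n.
Proof. by move=> le_ji; rewrite -(subnK le_ji) addnC iterD addKn => /(@iter_inj j). Qed.

Lemma forward_orbit_trans n m x :
  forward_orbit f n m -> forward_orbit f m x -> forward_orbit f n x.
Proof.
move=> [i [i_gt0 ->]] [j [j_gt0 ->]].
by exists (j + i); rewrite addn_gt0 j_gt0 iterD.
Qed.

Lemma forward_orbit_meet n m : n < m ->
  (exists x, forward_orbit f n x /\ forward_orbit f m x) <-> forward_orbit f n m.
Proof.
move=> lt_nm; split=> [[_ [[i [i_gt0 ->]] [j [j_gt0 eq_ij]]]] | n_m].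
  have [le_ji | lt_ij] := leqP j i.
    have m_def := iter_cancel le_ji eq_ij.
    exists (i - j); split=> //; rewrite subn_gt0 ltn_neqAle le_ji andbT.
    by apply: contraTneq lt_nm => eq_ji; rewrite m_def eq_ji subnn ltnn.
  have := iter_cancel (ltnW lt_ij) (esym eq_ij).
  by move/(congr1 (leq m)); rewrite iter_ge leqNgt lt_nm.
exists (f m); split; last by exists 1.
by apply: forward_orbit_trans n_m _; exists 1.
Qed.

Lemma forward_orbit_diff n k x :
  forward_orbit f n x /\ ~ forward_orbit f (iter k f n) x <->
  exists j, 1 <= j <= k /\ x = iter j f n.
Proof.
split=> [[[i [i_gt0 ->]] not_m_x] | [j [/andP[j_gt0 le_jk] ->]]].
  exists i; rewrite i_gt0 leqNgt; split=> //; apply/negP => lt_ki; apply: not_m_x.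
  by exists (i - k); rewrite subn_gt0 -iterD subnK ?(ltnW lt_ki).
split; first by exists j.
move=> [i [i_gt0 /eqP]]; have lt_j_ik : j < i + k := leq_add i_gt0 le_jk.
by rewrite -iterD (ltn_eqF (ltn_iter _ lt_j_ik)).
Qed.

End ForwardOrbit.

Lemma next_prime_gt x : x < next_prime x.
Proof. by rewrite /next_prime; case: ex_minnP => p /andP[]. Qed.

Lemma nth_prime_homo : {homo nth_prime : i j / i < j}.
Proof. by apply: homo_ltn ltn_trans _ => i; apply: next_prime_gt. Qed.

Lemma nth_prime_inj : injective nth_prime.
Proof. exact/incn_inj/leq_mono/nth_prime_homo. Qed.

Lemma nth_prime_gt x : x < nth_prime x.
Proof. by elim: x => // x IHx; apply: leq_ltn_trans IHx (nth_prime_homo (ltnSn x)). Qed.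

Theorem theorem5 (n m : nat) (hn : 0 < n) (hnm : n < m) :
  ((exists x, PT n x /\ PT m x) <-> PT n m) /\
  (forall k : nat, 0 < k -> m = iter_prime k n ->
     (forall x, PT m x -> PT n x) /\
     (forall x, (PT n x /\ ~ PT m x) <->
                (exists j, 1 <= j <= k /\ x = iter_prime j n))).
Proof.
split; first exact: forward_orbit_meet nth_prime_inj nth_prime_gt n m hnm.
move=> k k_gt0 ->; split=> x; last exact: (forward_orbit_diff nth_prime_gt n k x).
by apply: forward_orbit_trans; exists k.
Qed.
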